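(* Let $q\ge1$ and let $A=(a_{ijk})_{i,j\le n,k\le m}$ be a real array. Then $\mathbb{E}\varphi_A(E_n)\le C(q)\sqrt{W_A}$, where $C(q)$ depends only on $q$.
   Context: $E_n=(\mathcal E_1,\dots,\mathcal E_n)$ has i.i.d. standard symmetric exponential coordinates. $W_A=\big(\sum_k(\sum_{i,j}a_{ijk}^2)^{q/2}\big)^{1/q}$ and $\varphi_A(x)=\Big(\sum_k\Big(\sum_i\frac{(\sum_ja_{ijk}x_j)^4}{\sum_ja_{ijk}^2}\Big)^{q/2}\Big)^{1/(2q)}$ for $x\in\mathbb{R}^n$, terms with $\sum_ja_{ijk}^2=0$ being omitted. *)

From HB Require Import structures.
From mathcomp Require Import all_boot all_order all_algebra.
From mathcomp Require Import all_classical all_reals all_analysis.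
Set Implicit Arguments. Unset Strict Implicit. Unset Printing Implicit Defensive.
Import Order.TTheory GRing.Theory Num.Theory.
Local Open Scope ring_scope.

Section Defs.
Variable R : realType.

Definition sexp_density (t : R) : R := expR (- `|t|) / 2.

Definition ncons (t : R) (x : nat -> R) : nat -> R :=
  fun k => if k is k'.+1 then x k' else t.

(* E f(E_1,...,E_n) for i.i.d. symmetric exponential E_i, as iterated
   Lebesgue integrals against the product density (f nonnegative here);
   only the first n coordinates of the argument are relevant. *)
Fixpoint sexp_expect (n : nat) (f : (nat -> R) -> \bar R) : \bar R :=
  match n with
  | 0 => f (fun _ => 0)
  | n'.+1 => (\int[@lebesgue_measure R]_t
               ((sexp_density t)%:E * sexp_expect n' (fun x => f (ncons t x))))%E
  end.

Definition W_A (n m : nat) (q : R) (A : 'I_n -> 'I_n -> 'I_m -> R) : R :=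
  (\sum_(k < m) (\sum_(i < n) \sum_(j < n) A i j k ^+ 2) `^ (q / 2)) `^ (q^-1).

Definition phi_A (n m : nat) (q : R) (A : 'I_n -> 'I_n -> 'I_m -> R)
  (x : 'I_n -> R) : R :=
  (\sum_(k < m)
     (\sum_(i < n | (\sum_(j < n) A i j k ^+ 2) != 0)
        ((\sum_(j < n) A i j k * x j) ^+ 4 / \sum_(j < n) A i j k ^+ 2))
       `^ (q / 2)) `^ ((2 * q)^-1).

End Defs.

(* With r = q/2, w_ki = sum_j a_ijk^2 and S_k = sum_i w_ki we have
   phi_A(x)^(2q) = sum_k (sum_i y_ki^4 / w_ki)^r, where y_ki = sum_j a_ijk x_j,
   and W_A^q = sum_k S_k^r.  Jensen's inequality for the weights w_ki / S_k,
   together with m^r <= 1 + m^(N+1) for an integer N + 1 >= r and the bound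
   (2v)^(4(N+1)) <= C_N (e^v + e^-v) applied to v_ki = y_ki / (2 sqrt w_ki),
   gives phi_A(x) <= W_A^(1/2) (1 + C_N * an average of e^v_ki + e^-v_ki),
   the concavity of t |-> t^(1/(2q)) turning the sum over k into an average.
   Each v_ki is a combination of the E_j whose squared coefficients sum to at
   most 1/4, and the moment generating function (1 - c^2)^-1 <= e^(2 c^2) of
   the symmetric exponential law, applied one coordinate at a time, bounds the
   expectation of every e^(+-v_ki) by e^(1/2). *)

From Pilot Require Import Defs.
From HB Require Import structures.
From mathcomp Require Import all_boot all_order all_algebra.
From mathcomp Require Import all_classical all_reals all_analysis.
From mathcomp Require Import measurable_realfun.
From mathcomp Require Import ring lra.
Set Implicit Arguments.
Unset Strict Implicit.
Unset Printing Implicit Defensive.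
Import Order.TTheory GRing.Theory Num.Theory.
Local Open Scope ring_scope.

Section real_inequalities.
Variable R : realType.
Implicit Types (x y a b : R) (N p : nat).

Lemma powR_le1D y a b : 0 <= y -> 0 < a -> a <= b -> y `^ a <= 1 + y `^ b.
Proof.
move=> y0 a0 ab; have [y1|y1] := leP y 1.
  apply: (@le_trans _ _ 1); last by rewrite lerDl powR_ge0.
  have [->|yn0] := eqVneq y 0; first by rewrite powR0 ?gt_eqF.
  have yp : 0 < y by rewrite lt_neqAle eq_sym yn0.
  by rewrite -(powRr0 y) ger_powR ?yp // ltW.
by apply: le_trans (ler_powR (ltW y1) ab) _; rewrite lerDr.
Qed.

Lemma powR_le_mul1D x b y a : 0 <= x -> 0 <= b -> 0 <= y -> 0 < a -> a <= 1 ->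
  x <= b * (1 + y) -> x `^ a <= b `^ a * (1 + y).
Proof.
move=> x0 b0 y0 a0 a1 xb.
have y1 : 1 <= 1 + y by rewrite lerDl.
apply: le_trans (ge0_ler_powR (ltW a0) _ _ xb) _; rewrite ?nnegrE ?mulr_ge0 //.
  exact: le_trans y1.
rewrite powRM ?(le_trans _ y1) //; apply: ler_wpM2l; first exact: powR_ge0.
by rewrite -{2}(powRr1 (le_trans ler01 y1)) ler_powR.
Qed.

Lemma exprS_tangent_le x y N : 0 <= x -> 0 <= y ->
  y ^+ N.+1 + N.+1%:R * y ^+ N * (x - y) <= x ^+ N.+1.
Proof.
move=> x0 y0; elim: N => [|N IH]; first by rewrite mulr1 mul1r addrC subrK.
have yN0 : 0 <= y ^+ N by rewrite exprn_ge0.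
have N0 : 0 <= N.+1%:R :> R by [].
move: IH; rewrite !(exprS _ N.+1) (exprS y N) -[N.+2%:R]natr1 => IH.
set u := y ^+ N in yN0 IH *; set k := N.+1%:R in N0 IH *; set z := x ^+ N.+1 in IH *.
have gap_ge0 : 0 <= k * u * (x - y) ^+ 2 by rewrite mulr_ge0 ?sqr_ge0 ?mulr_ge0.
have IHx : x * (y * u + k * u * (x - y)) <= x * z by rewrite ler_wpM2l.
nra.
Qed.

Lemma exprS_jensen (I : finType) (w z : I -> R) N :
  (forall i, 0 <= w i) -> (forall i, 0 <= z i) -> \sum_i w i = 1 ->
  (\sum_i w i * z i) ^+ N.+1 <= \sum_i w i * z i ^+ N.+1.
Proof.
move=> w0 z0 w1; set y := \sum_i w i * z i.
have y0 : 0 <= y by rewrite sumr_ge0 // => i _; rewrite mulr_ge0.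
set d := N.+1%:R * y ^+ N.
have -> : y ^+ N.+1 = \sum_i w i * (y ^+ N.+1 + d * (z i - y)).
  have e i : w i * (y ^+ N.+1 + d * (z i - y))
      = y ^+ N.+1 * w i + (d * (w i * z i) - d * y * w i) by ring.
  under eq_bigr do rewrite e.
  by rewrite big_split sumrB -!mulr_sumr w1 -/y !mulr1 /= subrr addr0.
by apply: ler_sum => i _; rewrite ler_wpM2l ?exprS_tangent_le.
Qed.

Lemma exprn_le_fact_expR x p : 0 <= x -> x ^+ p <= p`!%:R * expR x.
Proof.
move=> x0; case: p => [|p]; first by rewrite expr0 fact0 mul1r -expR0 ler_expR.
have := expR_ge1Dxn p x0; rewrite -ler_pdivrMl ?ltr0n ?fact_gt0 //.
by move=> /(le_trans _)-> //; rewrite mulrC lerDr.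
Qed.

Definition moment_const N : R := 2 ^+ (4 * N.+1) * (4 * N.+1)`!%:R.

Lemma moment_const_ge0 N : 0 <= moment_const N.
Proof. by rewrite mulr_ge0 ?exprn_ge0. Qed.

Lemma exprn_quartic_le_expR x N :
  (2 * x) ^+ (4 * N.+1) <= moment_const N * (expR x + expR (- x)).
Proof.
have even_norm : x ^+ (4 * N.+1) = `|x| ^+ (4 * N.+1).
  by rewrite -normrX ger0_norm // mulnC exprM exprn_even_ge0.
rewrite exprMn even_norm /moment_const -mulrA ler_wpM2l ?exprn_ge0 //.
apply: le_trans (exprn_le_fact_expR _ (normr_ge0 x)) _.
rewrite ler_wpM2l //; have [x0|x0] := leP 0 x.
  by rewrite ger0_norm // lerDl expR_ge0.
by rewrite ltr0_norm // lerDr expR_ge0.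
Qed.

Lemma quartic_ratioE x y : 0 <= y ->
  x ^+ 4 / y ^+ 2 = (2 * (x / (2 * Num.sqrt y))) ^+ 4.
Proof.
move=> y0; rewrite [in RHS]mulrCA [in RHS]invfM mulVKf ?pnatr_eq0 //.
by rewrite expr_div_n (_ : 4 = 2 * 2)%N // !exprM sqr_sqrtr.
Qed.

Lemma sum_weighted_mean (I : finType) (w z : I -> R) : (forall i, 0 <= w i) ->
  \sum_i w i * z i = (\sum_i w i) * \sum_i w i / (\sum_j w j) * z i.
Proof.
move=> w0; have [W0|Wn0] := eqVneq (\sum_j w j) 0.
  have /psumr_eq0P w_eq0 := W0; rewrite W0 mul0r big1 // => i _.
  by rewrite w_eq0 ?mul0r.
by rewrite mulr_sumr; apply: eq_bigr => i _; rewrite mulrA mulrCA divff // mulr1.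
Qed.

Lemma sum_div_sum_le1 (I : finType) (w : I -> R) : (forall i, 0 <= w i) ->
  \sum_i w i / (\sum_j w j) <= 1.
Proof.
move=> w0; rewrite -mulr_suml.
by have [->|Wn0] := eqVneq (\sum_j w j) 0; rewrite ?mul0r ?divff.
Qed.

Lemma powR_sum_quartic_le (I : finType) (w y : I -> R) (r : R) N :
  0 < r -> r <= N.+1%:R -> (forall i, 0 <= w i) ->
  (\sum_i y i ^+ 4 / w i) `^ r <= (\sum_i w i) `^ r *
    (1 + moment_const N * \sum_i w i / (\sum_j w j) *
       (expR (y i / (2 * Num.sqrt (w i))) + expR (- (y i / (2 * Num.sqrt (w i)))))).
Proof.
move=> r_gt0 rN w0; set S := \sum_j w j; have S0 : 0 <= S by rewrite sumr_ge0.
pose z i := y i ^+ 4 / w i ^+ 2.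
have z0 i : 0 <= z i by rewrite divr_ge0 ?exprn_even_ge0.
have -> : \sum_i y i ^+ 4 / w i = S * \sum_i w i / S * z i.
  rewrite -sum_weighted_mean //; apply: eq_bigr => i _ /=.
  have [->|wi0] := eqVneq (w i) 0; first by rewrite invr0 !mulr0 mul0r.
  by rewrite /z; field.
have [->|Sn0] := eqVneq S 0; first by rewrite mul0r powR0 ?gt_eqF ?mul0r.
have p0 i : 0 <= w i / S by rewrite divr_ge0.
have p1 : \sum_i w i / S = 1 by rewrite -mulr_suml divff.
rewrite powRM ?sumr_ge0 // => [|i _]; last by rewrite mulr_ge0.
rewrite ler_wpM2l ?powR_ge0 //.
apply: le_trans (powR_le1D (sumr_ge0 _ (fun i _ => mulr_ge0 (p0 i) (z0 i))) r_gt0 rN) _.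
rewrite powR_mulrn ?sumr_ge0 // => [|i _]; last by rewrite mulr_ge0.
rewrite lerD2l; apply: le_trans (exprS_jensen N p0 z0 p1) _.
rewrite mulr_sumr; apply: ler_sum => i _; rewrite mulrCA ler_wpM2l //.
by rewrite /z quartic_ratioE // -exprM exprn_quartic_le_expR.
Qed.

End real_inequalities.

Section symmetric_exponential.
Variable R : realType.
Local Notation mu := (@lebesgue_measure R).
Local Open Scope ereal_scope.

Lemma ge0_le_integralT d (T : measurableType d) (nu : {measure set T -> \bar R})
    (f g : T -> \bar R) :
  (forall x, 0 <= f x) -> (forall x, f x <= g x) ->
  \int[nu]_x f x <= \int[nu]_x g x.
Proof.
move=> f0 fg; rewrite !ge0_integralTE // => [|x]; last exact: le_trans (fg x).
by apply: ereal_sup_le => _ [h hf <-]; exists h => //= x; exact: le_trans (hf x) (fg x).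
Qed.

Lemma sexp_density_ge0 (t : R) : (0 <= sexp_density t)%R.
Proof. by rewrite divr_ge0 ?expR_ge0. Qed.

Lemma measurable_sexp_density_expR (c : R) :
  measurable_fun setT (fun t => sexp_density t * expR (c * t))%R.
Proof.
apply: measurable_funM.
  apply: measurable_funM => //.
  by apply: measurableT_comp; [exact: measurable_expR | exact: measurableT_comp].
by apply: measurableT_comp; [exact: measurable_expR | exact: measurable_funM].
Qed.

Lemma sexp_density_expR_ge0 (c t : R) : (0 <= sexp_density t * expR (c * t))%R.
Proof. by rewrite mulr_ge0 ?sexp_density_ge0 ?expR_ge0. Qed.

Lemma sexp_mgf_halfline (a : R) : (a < 1)%R ->
  \int[mu]_(t in `[0%R, +oo[) (sexp_density t * expR (a * t))%:E
    <= ((2 * (1 - a))^-1)%:E.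
Proof.
move=> a1; have a1_gt0 : (0 < 1 - a)%R by rewrite subr_gt0.
rewrite (@eq_integral _ _ _ mu _
  (fun t => ((2 * (1 - a))^-1)%:E * (exponential_pdf (1 - a) t)%:E)); last first.
  move=> t; rewrite inE /= in_itv /= andbT => t0.
  rewrite -EFinM exponential_pdfE //; congr EFin.
  rewrite /sexp_density ger0_norm // mulrC mulrA -expRD.
  have -> : (a * t - t = - (1 - a) * t)%R by ring.
  by field; rewrite gt_eqF.
have mpdf := measurable_exponential_pdf (1 - a).
have pdf0 t : 0 <= (exponential_pdf (1 - a) t)%:E.
  by rewrite lee_fin exponential_pdf_ge0 // ltW.
rewrite ge0_integralZl_EFin //=; last 2 first.
- exact/measurable_EFinP/measurable_funTS.
- by rewrite invr_ge0 mulr_ge0 // ltW.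
rewrite -[leRHS]mule1 lee_pmul2l ?lte_fin ?invr_gt0 ?mulr_gt0 //.
rewrite -(integral_exponential_pdf a1_gt0).
by apply: ge0_subset_integral => //; exact/measurable_EFinP.
Qed.

Lemma sexp_mgf_le (c : R) : (c ^+ 2 <= 4^-1)%R ->
  \int[mu]_t (sexp_density t * expR (c * t))%:E <= (expR (2 * c ^+ 2))%:E.
Proof.
move=> c2; have c1 : (c < 1)%R by nra.
have Nc1 : (- c < 1)%R by nra.
have mf (c' : R) (D : set R) :
    measurable_fun D (fun t => (sexp_density t * expR (c' * t))%:E).
  by apply/measurable_EFinP; apply: measurable_funTS; exact: measurable_sexp_density_expR.
have f0 (c' t : R) : 0 <= (sexp_density t * expR (c' * t))%:E.
  by rewrite lee_fin sexp_density_expR_ge0.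
rewrite -(setUv `[0%R, +oo[%classic) ge0_integral_setU //=;
  [|exact: measurableC|exact: mf|exact/disj_setPCl].
have neg_half : \int[mu]_(t in ~` `[0%R, +oo[%classic) (sexp_density t * expR (c * t))%:E
    <= \int[mu]_(t in `[0%R, +oo[) (sexp_density t * expR (- c * t))%:E.
  apply: (@le_trans _ _ (\int[mu]_(t in `]-oo, 0%R]) (sexp_density t * expR (c * t))%:E)).
    apply: ge0_subset_integral => //; [exact: measurableC | exact: mf |].
    by move=> t /=; rewrite !in_itv /= andbT => /negP; rewrite -ltNge => /ltW.
  rewrite (ge0_integration_by_substitution0
    (f := fun t => (sexp_density t * expR (- c * t))%:E)).
  - rewrite le_eqVlt; apply/predU1P; left.
    by apply: eq_integral => t _; rewrite /sexp_density normrN mulNr mulrN opprK.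
  - exact: mf.
  - exact: f0.
apply: le_trans (leeD (sexp_mgf_halfline c1) (le_trans neg_half (sexp_mgf_halfline Nc1))) _.
rewrite -EFinD lee_fin.
(* the two half-lines add up to the exact value (1 - c^2)^-1 of the MGF *)
have -> : ((2 * (1 - c))^-1 + (2 * (1 - - c))^-1 = (1 - c ^+ 2)^-1)%R.
  by field; rewrite ?subr_eq0 ?gt_eqF ?lt_eqF; try nra.
apply: le_trans (expR_ge1Dx _); rewrite -div1r ler_pdivrMr; nra.
Qed.

Lemma sexp_mgfZ_le (k c : R) : (0 <= k)%R -> (c ^+ 2 <= 4^-1)%R ->
  \int[mu]_t (k * (sexp_density t * expR (c * t)))%:E <= (k * expR (2 * c ^+ 2))%:E.
Proof.
move=> k0 c2; under eq_integral do rewrite EFinM.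
rewrite ge0_integralZl_EFin //.
- by rewrite EFinM lee_wpmul2l ?lee_fin ?sexp_mgf_le.
- by move=> t _; rewrite lee_fin sexp_density_expR_ge0.
- by apply/measurable_EFinP; exact: measurable_sexp_density_expR.
Qed.

Lemma sexp_integral_exp_sum_le (I : finType) (a : R) (b d : I -> R) :
  (0 <= a)%R -> (forall i, 0 <= b i)%R -> (forall i, d i ^+ 2 <= 4^-1)%R ->
  \int[mu]_t (sexp_density t * (a + \sum_i b i * expR (d i * t)))%:E
    <= (a + \sum_i b i * expR (2 * d i ^+ 2))%:E.
Proof.
move=> a0 b0 d2.
have mf (k c : R) (D : set R) :
    measurable_fun D (fun t => (k * (sexp_density t * expR (c * t)))%:E).
  apply/measurable_EFinP; apply: measurable_funTS.
  by apply: measurable_funM => //; exact: measurable_sexp_density_expR.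
have f0 (k c t : R) : (0 <= k)%R -> 0 <= (k * (sexp_density t * expR (c * t)))%:E.
  by move=> k0; rewrite lee_fin mulr_ge0 ?sexp_density_expR_ge0.
rewrite (@eq_integral _ _ _ mu _ (fun t => (a * (sexp_density t * expR (0 * t)))%:E
    + \sum_i (b i * (sexp_density t * expR (d i * t)))%:E)); last first.
  move=> t _; rewrite sumEFin -EFinD mul0r expR0 mulr1 mulrDr mulr_sumr mulrC.
  by congr (_ + _)%:E; apply: eq_bigr => i _; rewrite mulrCA.
rewrite ge0_integralD //; first last.
- by apply: emeasurable_sum => i; exact: mf.
- by move=> t _; apply: sume_ge0 => i _; exact: f0.
- exact: mf.
- by move=> t _; exact: f0.
rewrite ge0_integral_sum //; first last.
- by move=> i t _; exact: f0.
- by move=> i; exact: mf.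
rewrite EFinD -sumEFin leeD //.
  apply: le_trans (sexp_mgfZ_le a0 _) _; first by rewrite expr0n invr_ge0.
  by rewrite expr0n mulr0 expR0 mulr1.
by apply: lee_sum => i _; exact: sexp_mgfZ_le.
Qed.

Lemma sexp_expect_ge0 n (f : (nat -> R) -> \bar R) :
  (forall x, 0 <= f x) -> 0 <= sexp_expect n f.
Proof.
elim: n f => [|n IH] f f0 /=; first exact: f0.
by apply: integral_ge0 => t _; rewrite mule_ge0 ?lee_fin ?sexp_density_ge0 ?IH.
Qed.

Lemma le_sexp_expect n (f g : (nat -> R) -> \bar R) :
  (forall x, 0 <= f x) -> (forall x, f x <= g x) -> sexp_expect n f <= sexp_expect n g.
Proof.
elim: n f g => [|n IH] f g f0 fg /=; first exact: fg.
apply: ge0_le_integralT => t.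
  by rewrite mule_ge0 ?lee_fin ?sexp_density_ge0 ?sexp_expect_ge0.
by rewrite lee_wpmul2l ?lee_fin ?sexp_density_ge0 ?IH.
Qed.

Lemma sexp_expect_exp_sum_le (I : finType) n (a : R) (b : I -> R) (c : I -> 'I_n -> R) :
  (0 <= a)%R -> (forall i, 0 <= b i)%R -> (forall i j, c i j ^+ 2 <= 4^-1)%R ->
  sexp_expect n (fun x => (a + \sum_i b i * expR (\sum_j c i j * x j))%:E)
    <= (a + \sum_i b i * expR (2 * \sum_j c i j ^+ 2))%:E.
Proof.
move=> a0; elim: n b c => [|n IH] b c b0 c2 /=.
  by rewrite lee_fin lerD2l; apply: ler_sum => i _; rewrite !big_ord0 mulr0.
pose c' i (j : 'I_n) := c i (lift ord0 j).
pose K i := expR (2 * \sum_j c' i j ^+ 2).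
apply: (@le_trans _ _
  (\int[mu]_t (sexp_density t * (a + \sum_i (b i * K i) * expR (c i ord0 * t)))%:E)).
  apply: ge0_le_integralT => t.
    by rewrite mule_ge0 ?lee_fin ?sexp_density_ge0 // sexp_expect_ge0 // => x;
      rewrite lee_fin addr_ge0 // sumr_ge0 // => i _; rewrite mulr_ge0 ?expR_ge0.
  rewrite [leRHS]EFinM lee_wpmul2l ?lee_fin ?sexp_density_ge0 //.
  (* qualified: [ncons] alone is the list function of [seq] *)
  have shift (x : nat -> R) : (\sum_i b i * expR (\sum_j c i j * Defs.ncons t x j)
      = \sum_i (b i * expR (c i ord0 * t)) * expR (\sum_j c' i j * x j))%R.
    by apply: eq_bigr => i _; rewrite big_ord_recl expRD mulrA.
  under eq_fun do rewrite shift.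
  apply: le_trans (IH _ c' _ _) _ => [i|i j|]; [by rewrite mulr_ge0 ?expR_ge0 | exact: c2 |].
  rewrite lee_fin lerD2l le_eqVlt; apply/predU1P; left.
  by apply: eq_bigr => i _; rewrite mulrAC.
apply: le_trans (sexp_integral_exp_sum_le (b := (fun i => b i * K i)%R)
  (d := fun i => c i ord0) a0 _ _) _ => [i|i|]; [by rewrite mulr_ge0 ?expR_ge0 | exact: c2 |].
rewrite lee_fin lerD2l le_eqVlt; apply/predU1P; left; apply: eq_bigr => i _.
by rewrite big_ord_recl mulrDr expRD mulrA mulrAC.
Qed.

Lemma sexp_expect_cosh_sum_le (I : finType) n (a : R) (b : I -> R) (c : I -> 'I_n -> R) :
  (0 <= a)%R -> (forall i, 0 <= b i)%R -> (forall i j, c i j ^+ 2 <= 4^-1)%R ->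
  sexp_expect n (fun x => (a + \sum_i b i *
      (expR (\sum_j c i j * x j) + expR (- \sum_j c i j * x j)))%:E)
    <= (a + \sum_i b i * (2 * expR (2 * \sum_j c i j ^+ 2)))%:E.
Proof.
move=> a0 b0 c2.
have sum_pair_bool (F : I * bool -> R) :
    (\sum_l F l = \sum_i (F (i, true) + F (i, false)))%R.
  transitivity (\sum_(l : I * bool) F (l.1, l.2))%R; first by apply: eq_bigr => -[].
  by rewrite -(pair_bigA _ (fun i b => F (i, b))); apply: eq_bigr => i _; rewrite big_bool.
pose cs (l : I * bool) j := if l.2 then c l.1 j else (- c l.1 j)%R.
apply: le_trans (le_sexp_expect n _ _)
  (le_trans (sexp_expect_exp_sum_le (b := fun l => b l.1) (c := cs) a0 _ _) _) => [x|x|l|l j|].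
- rewrite lee_fin addr_ge0 // sumr_ge0 // => i _.
  by rewrite mulr_ge0 ?addr_ge0 ?expR_ge0.
- rewrite sum_pair_bool lee_fin lerD2l le_eqVlt; apply/predU1P; left.
  apply: eq_bigr => i _; rewrite /cs /= -mulrDr -sumrN.
  by congr (_ * (_ + expR _))%R; apply: eq_bigr => j _; rewrite mulNr.
- exact: b0.
- by rewrite /cs; case: l.2; rewrite ?sqrrN.
rewrite sum_pair_bool lee_fin lerD2l le_eqVlt; apply/predU1P; left.
apply: eq_bigr => i _; rewrite /cs /=.
have sqN : (\sum_j (- c i j) ^+ 2 = \sum_j c i j ^+ 2)%R.
  by apply: eq_bigr => j _; rewrite sqrrN.
by rewrite sqN -mulrDr [(2 * expR _)%R]mulr_natl mulr2n.
Qed.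

End symmetric_exponential.

Section array_bound.
Variables (R : realType) (n m : nat) (A : 'I_n -> 'I_n -> 'I_m -> R) (q : R).

(* [row_sqnorm k i], [slice_sqnorm k] and [Wq] are w_ki, S_k and W_A^q of the
   header, [weight (k, i)] is (S_k^r / W_A^q) (w_ki / S_k), and [coef (k, i)] is
   the coefficient vector of v_ki. *)
Definition row_sqnorm k i := \sum_j A i j k ^+ 2.

Definition slice_sqnorm k := \sum_i row_sqnorm k i.

Definition Wq := \sum_k slice_sqnorm k `^ (q / 2).

Definition weight (p : 'I_m * 'I_n) :=
  slice_sqnorm p.1 `^ (q / 2) / Wq * (row_sqnorm p.1 p.2 / slice_sqnorm p.1).

Definition coef (p : 'I_m * 'I_n) j := A p.2 j p.1 / (2 * Num.sqrt (row_sqnorm p.1 p.2)).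

Lemma row_sqnorm_ge0 k i : 0 <= row_sqnorm k i.
Proof. by rewrite sumr_ge0 // => j _; exact: sqr_ge0. Qed.

Lemma slice_sqnorm_ge0 k : 0 <= slice_sqnorm k.
Proof. by rewrite sumr_ge0 // => i _; exact: row_sqnorm_ge0. Qed.

Lemma Wq_ge0 : 0 <= Wq.
Proof. by rewrite sumr_ge0 // => k _; exact: powR_ge0. Qed.

Lemma weight_ge0 p : 0 <= weight p.
Proof.
by rewrite mulr_ge0 ?divr_ge0 ?powR_ge0 ?Wq_ge0 ?row_sqnorm_ge0 ?slice_sqnorm_ge0.
Qed.

Lemma sum_weight_le1 : \sum_p weight p <= 1.
Proof.
rewrite -(pair_bigA _ (fun k i => weight (k, i))) /=.
apply: le_trans (sum_div_sum_le1 (fun k => powR_ge0 (slice_sqnorm k) (q / 2))).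
apply: ler_sum => k _; rewrite /weight /= -mulr_sumr ler_piMr ?divr_ge0 ?powR_ge0 ?Wq_ge0 //.
exact: sum_div_sum_le1 (row_sqnorm_ge0 k).
Qed.

Lemma sum_coef_sq_le p : \sum_j coef p j ^+ 2 <= 4^-1.
Proof.
under eq_bigr do rewrite expr_div_n exprMn sqr_sqrtr ?row_sqnorm_ge0 //.
rewrite -mulr_suml -/(row_sqnorm _ _).
have [->|w0] := eqVneq (row_sqnorm p.1 p.2) 0; first by rewrite mul0r invr_ge0.
by rewrite (_ : _ / _ = 4^-1) //; field.
Qed.

Lemma coef_sq_le p j : coef p j ^+ 2 <= 4^-1.
Proof.
apply: le_trans (sum_coef_sq_le p); rewrite (bigD1 j) //= lerDl.
by rewrite sumr_ge0 // => i _; exact: sqr_ge0.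
Qed.

Lemma sqrt_W_A : Num.sqrt (W_A q A) = Wq `^ (2 * q)^-1.
Proof. by rewrite -powR12_sqrt ?powR_ge0 // -powRrM [q^-1 / 2]mulrC invfM. Qed.

(* The omitted terms vanish anyway, since division by 0 yields 0. *)
Lemma phi_AE (x : 'I_n -> R) : phi_A q A x =
  (\sum_k (\sum_i (\sum_j A i j k * x j) ^+ 4 / row_sqnorm k i) `^ (q / 2)) `^ (2 * q)^-1.
Proof.
rewrite /phi_A; congr (_ `^ _); apply: eq_bigr => k _; congr (_ `^ _).
rewrite big_mkcond; apply: eq_bigr => i _; case: ifPn => // /negPn /eqP w0.
by rewrite /row_sqnorm w0 invr0 mulr0.
Qed.

Variable N : nat.
Hypotheses (q_ge1 : 1 <= q) (q_le_N : q / 2 <= N.+1%:R).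

Lemma phi_A_le (x : 'I_n -> R) : phi_A q A x <= Wq `^ (2 * q)^-1 +
  \sum_p Wq `^ (2 * q)^-1 * moment_const R N * weight p *
    (expR (\sum_j coef p j * x j) + expR (- \sum_j coef p j * x j)).
Proof.
have q_gt0 : 0 < q by apply: lt_le_trans q_ge1.
have a_gt0 : 0 < (2 * q)^-1 by rewrite invr_gt0 mulr_gt0.
have a_le1 : (2 * q)^-1 <= 1 by rewrite invf_le1 ?mulr_gt0 //; have := q_ge1; lra.
set K := moment_const R N.
set E := fun p => expR (\sum_j coef p j * x j) + expR (- \sum_j coef p j * x j).
have slice_le k : (\sum_i (\sum_j A i j k * x j) ^+ 4 / row_sqnorm k i) `^ (q / 2)
    <= slice_sqnorm k `^ (q / 2) * (1 + K * \sum_i row_sqnorm k i / slice_sqnorm k * E (k, i)).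
  have vE i : \sum_j coef (k, i) j * x j
      = (\sum_j A i j k * x j) / (2 * Num.sqrt (row_sqnorm k i)).
    by rewrite mulr_suml; apply: eq_bigr => j _; rewrite mulrAC.
  rewrite /E; under [X in _ <= _ * (1 + _ * X)]eq_bigr do rewrite vE.
  exact: powR_sum_quartic_le (divr_gt0 q_gt0 _) q_le_N (row_sqnorm_ge0 k).
have Phi_le : \sum_k (\sum_i (\sum_j A i j k * x j) ^+ 4 / row_sqnorm k i) `^ (q / 2)
    <= Wq * (1 + \sum_k slice_sqnorm k `^ (q / 2) / Wq *
                   (K * \sum_i row_sqnorm k i / slice_sqnorm k * E (k, i))).
  apply: le_trans (ler_sum _ (fun k _ => slice_le k)) _.
  rewrite mulrDr mulr1 -(sum_weighted_mean _ (fun k => powR_ge0 (slice_sqnorm k) (q / 2))).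
  by rewrite -big_split /=; apply: ler_sum => k _; rewrite mulrDr mulr1.
have E_ge0 p : 0 <= E p by rewrite addr_ge0 ?expR_ge0.
rewrite phi_AE; apply: le_trans (powR_le_mul1D _ Wq_ge0 _ a_gt0 a_le1 Phi_le) _.
- by rewrite sumr_ge0 // => k _; exact: powR_ge0.
- rewrite sumr_ge0 // => k _.
  rewrite mulr_ge0 ?divr_ge0 ?powR_ge0 ?Wq_ge0 ?mulr_ge0 ?moment_const_ge0 //.
  rewrite sumr_ge0 // => i _.
  by rewrite mulr_ge0 ?divr_ge0 ?row_sqnorm_ge0 ?slice_sqnorm_ge0.
rewrite mulrDr mulr1 lerD2l.
rewrite -(pair_bigA _ (fun k i => Wq `^ (2 * q)^-1 * K * weight (k, i) * E (k, i))) mulr_sumr.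
apply: ler_sum => k _; rewrite !mulr_sumr; apply: ler_sum => i _.
by rewrite le_eqVlt; apply/predU1P; left; rewrite /weight /=; ring.
Qed.

Lemma majorant_mean_le : Wq `^ (2 * q)^-1 + \sum_p Wq `^ (2 * q)^-1 * moment_const R N *
    weight p * (2 * expR (2 * \sum_j coef p j ^+ 2))
  <= (1 + 2 * moment_const R N * expR 2^-1) * Wq `^ (2 * q)^-1.
Proof.
set Ba := Wq `^ _; set K := moment_const R N.
have BaK_ge0 : 0 <= Ba * K by rewrite mulr_ge0 ?powR_ge0 ?moment_const_ge0.
rewrite mulrDl mul1r lerD2l.
apply: (@le_trans _ _ (\sum_p Ba * K * (2 * expR 2^-1) * weight p)).
  apply: ler_sum => p _; rewrite mulrAC ler_wpM2r ?weight_ge0 // ler_wpM2l //.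
  by rewrite ler_pM2l // ler_expR; have := sum_coef_sq_le p; lra.
rewrite -mulr_sumr; apply: le_trans (ler_piMr _ sum_weight_le1) _.
  by rewrite mulr_ge0 // mulr_ge0 ?expR_ge0.
by rewrite le_eqVlt; apply/predU1P; left; ring.
Qed.

End array_bound.

Theorem lemma5p2 (R : realType) (q : R) (hq : 1 <= q) :
  exists C : R, forall (n m : nat) (A : 'I_n -> 'I_n -> 'I_m -> R),
    (sexp_expect n (fun x : nat -> R => (phi_A q A (fun i : 'I_n => x (val i)))%:E)
      <= (C * Num.sqrt (W_A q A))%:E)%E.
Proof.
set N := Num.truncn (q / 2).
have q_le_N : q / 2 <= N.+1%:R by exact/ltW/truncnS_gt.
exists (1 + 2 * moment_const R N * expR 2^-1) => n m A.
rewrite sqrt_W_A.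
apply: le_trans (le_sexp_expect n _ _)
  (le_trans (sexp_expect_cosh_sum_le (a := Wq A q `^ (2 * q)^-1)
    (b := fun p => Wq A q `^ (2 * q)^-1 * moment_const R N * weight A q p) (c := coef A)
    _ _ _) _) => [x|x||p|p j|].
- by rewrite lee_fin powR_ge0.
- by rewrite lee_fin phi_A_le.
- exact: powR_ge0.
- by rewrite mulr_ge0 ?weight_ge0 // mulr_ge0 ?powR_ge0 ?moment_const_ge0.
- exact: coef_sq_le.
- by rewrite lee_fin majorant_mean_le.
Qed.
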